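(* The statement $\tilde S(1)$ holds.
   Context: Parallelograms in $\mathbb{R}$ are compact intervals $\{b+x:|x|\le l\}$, $l>0$, with width $l$; $CR$ is the dilation of $R$ by factor $C$ about its centre. A finite family $\mathcal R$ is $B$-overlapping ($B:[1,\infty)\to[1,\infty)$ increasing) if $\sum_{R\in\mathcal R}1_{\mu R}\le B(\mu)$ for all $\mu\ge1$; a family depending on $\delta$ is boundedly overlapping if this holds with $B$ independent of $\delta$. Decoupling: for $S\subseteq\mathbb{R}^m$, a finite family $\mathcal R$ of parallelograms and $p,q\in[2,\infty]$, $\mathrm{Dec}(S,\mathcal R,p,q)$ is the smallest constant with $\|\sum_R f_R\|_{L^p(\mathbb{R}^m)}\le \mathrm{Dec}\,(\#\mathcal R)^{\frac12-\frac1q}\big\|\|f_R\|_{L^p}\big\|_{\ell^q(R\in\mathcal R)}$ for all smooth $f_R$ Fourier supported in $R\cap S$. $S$ can be $\ell^q(L^p)$ decoupled into $\mathcal R$ at cost $K$ if $S\subseteq\bigcup\mathcal R$ and $\mathrm{Dec}\le K$. $\mathcal P_{n,d}$: real polynomials in $n$ variables of degree at most $d$ with $\max_{[-1,1]^n}|\phi|\le1$. $\tilde S(n)$ means: for every $d\ge1$ there is $c_{n,d}>0$ such that for every $\phi\in\mathcal P_{n,d}$, every $0<\delta<c_{n,d}$, every $\varepsilon\in(0,1]$ and every parallelogram $R\subseteq[-1,1]^n$ of width at least $\delta$, there is a covering $\mathcal S_\delta$ of $\{x\in R:|\phi(x)|\le\delta\}$ by parallelograms contained in $2R$ such that (1)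 each member has width at least $\delta$ and $\mathcal S_\delta$ is boundedly overlapping; (2) $|\phi(x)|\le C\delta$ for every $x$ in every member; (3) for every $2\le p\le\frac{2(n+1)}{n-1}$ (for $n=1$: every $p\in[2,\infty]$), $\{x\in R:|\phi(x)|\le\delta\}$ can be $\ell^p(L^p)$ decoupled into $\mathcal S_\delta$ at cost at most $C\delta^{-\varepsilon}$. Here $C$ and the overlap function depend only on $n,d,\varepsilon,p$. *)

From HB Require Import structures.
From mathcomp Require Import all_boot all_order all_algebra.
From mathcomp Require Import all_classical all_reals all_analysis.
Set Implicit Arguments. Unset Strict Implicit. Unset Printing Implicit Defensive.
Import Order.TTheory GRing.Theory Num.Theory.
Import numFieldNormedType.Exports.
Local Open Scope classical_set_scope.
Local Open Scope ring_scope.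

Section Defs.
Variable R : realType.

(* A parallelogram in R^1 is encoded by P = (b, l) with l > 0 (centre b,
   width l); it is the interval {b + x : |x| <= l}.
   [par_set P mu] is the dilate mu P = {b + x : |x| <= mu * l}. *)
Definition is_par (P : R * R) : Prop := 0 < P.2.
Definition par_set (P : R * R) (mu : R) : set R :=
  [set x | `|x - P.1| <= mu * P.2].

Definition overlap_le (fam : seq (R * R)) (B : R -> R) : Prop :=
  forall mu : R, 1 <= mu -> forall x : R,
    \sum_(P <- fam) (\1_(par_set P mu) x : R) <= B mu.

Definition overlap_fun (B : R -> R) : Prop :=
  (forall mu, 1 <= mu -> 1 <= B mu) /\
  (forall mu1 mu2, 1 <= mu1 -> mu1 <= mu2 -> B mu1 <= B mu2).

Definition schwartz (f : R -> R) : Prop :=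
  forall k : nat,
    (forall x : R, derivable (derive1n k f) x 1) /\
    (forall a : nat, exists M : R, forall x : R,
        `|x ^+ a * derive1n k f x| <= M).

(* A complex-valued function is a pair (u, v) : real and imaginary parts.
   Fourier transform  \hat f(xi) = \int f(x) e^{-2 pi i x xi} dx. *)
Definition fourier_re (u v : R -> R) (xi : R) : R :=
  Rintegral lebesgue_measure setT
    (fun x => u x * cos (2 * pi * x * xi) + v x * sin (2 * pi * x * xi)).
Definition fourier_im (u v : R -> R) (xi : R) : R :=
  Rintegral lebesgue_measure setT
    (fun x => v x * cos (2 * pi * x * xi) - u x * sin (2 * pi * x * xi)).

Definition fourier_supported_in (u v : R -> R) (K : set R) : Prop :=
  forall xi, ~ K xi -> fourier_re u v xi = 0 /\ fourier_im u v xi = 0.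

Definition cmod (u v : R -> R) (x : R) : R := Num.sqrt (u x ^+ 2 + v x ^+ 2).

Definition LpC (p : \bar R) (u v : R -> R) : \bar R :=
  Lnorm lebesgue_measure p (fun x => (cmod u v x)%:E).

Definition einv (q : \bar R) : R :=
  match q with EFin r => r^-1 | _ => 0 end.

Definition ellq (q : \bar R) (n : nat) (a : nat -> \bar R) : \bar R :=
  match q with
  | EFin r => ((\sum_(i < n) (a i) `^ r) `^ r^-1)%E
  | _ => (\big[maxe/0%E]_(i < n) a i)%E
  end.

(* "Dec(S, fam, p, q) <= K": the l^q(L^p) decoupling inequality holds with
   constant K, for all (complex) Schwartz f_P Fourier supported in P /\ S. *)
Definition dec_le (S : set R) (fam : seq (R * R)) (p q : \bar R) (K : R)
  : Prop :=
  forall u v : nat -> R -> R,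
    (forall i, (i < size fam)%N ->
       schwartz (u i) /\ schwartz (v i) /\
       fourier_supported_in (u i) (v i) (par_set (nth (0, 0) fam i) 1 `&` S)) ->
    (LpC p (fun x => (\sum_(i < size fam) u i x)%R)
           (fun x => (\sum_(i < size fam) v i x)%R)
     <= (K * (size fam)%:R `^ (2^-1 - einv q))%R%:E *
        ellq q (size fam) (fun i => LpC p (u i) (v i)))%E.

Definition poly_class (d : nat) (phi : {poly R}) : Prop :=
  (size phi <= d.+1)%N /\ (forall x : R, -1 <= x <= 1 -> `|phi.[x]| <= 1).

Definition sublevel (phi : {poly R}) (Rr : R * R) (delta : R) : set R :=
  [set x | par_set Rr 1 x /\ `|phi.[x]| <= delta].

Definition par_cover (S : set R) (fam : seq (R * R)) : Prop :=
  forall x, S x -> exists2 P, P \in fam & par_set P 1 x.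

End Defs.

From HB Require Import structures.
From mathcomp Require Import all_boot all_order all_algebra.
From mathcomp Require Import all_classical all_reals all_analysis.
From mathcomp Require Import measurable_realfun ess_sup_inf qpoly polyrcf.
From mathcomp Require Import ring lra.
Import Order.TTheory GRing.Theory Num.Theory.
Import numFieldNormedType.Exports.
Local Open Scope classical_set_scope.
Local Open Scope ring_scope.

(* In one dimension the sublevel set {x in R : |phi x| <= delta} is a finite
   union of intervals whose endpoints are either endpoints of R or solutions
   of phi^2 = delta^2, so at most (2d+2)^2 intervals with endpoints in that
   set cover it.  Widening each of them to length 2 delta inside R costs only
   O(delta) in |phi|, because every phi in P_{1,d} is Lipschitz on [-1, 1]
   with a constant depending on d alone.  With a number of pieces bounded
   independently of delta, the triangle inequality already decouples at cost
   at most that number. *)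

Section Lnorm_bounds.
Context {d} {T : measurableType d} {R : realType} (mu : {measure set T -> \bar R}).
Local Open Scope ereal_scope.

Lemma le_Lnorm (p : \bar R) (f g : T -> R) : 0 < p ->
  measurable_fun setT f -> measurable_fun setT g ->
  (forall x, `|f x| <= `|g x|)%R ->
  Lnorm mu p (EFin \o f) <= Lnorm mu p (EFin \o g).
Proof.
case: p => [r| |] // + mf mg fg; rewrite unlock /=; last first.
  by move=> _; case: ifPn => // _; apply/le_ess_sup/nearW => x /=; rewrite lee_fin.
rewrite lte_fin => r0.
have mpow (h : T -> R) : measurable_fun setT h ->
    measurable_fun setT ((fun x => (`|h x| `^ r)%:E) : T -> \bar R).
  move=> mh; apply/measurable_EFinP.
  exact/(measurableT_comp (measurable_powR r))/measurableT_comp.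
apply: gt0_ler_poweR; rewrite ?in_itv /= ?leey ?andbT.
- by rewrite invr_ge0 ltW.
- by apply: integral_ge0 => x _; rewrite lee_fin powR_ge0.
- by apply: integral_ge0 => x _; rewrite lee_fin powR_ge0.
apply: ge0_le_integral => //; try exact: mpow.
by move=> x _; rewrite lee_fin; apply: ge0_ler_powR; rewrite ?nnegrE // ltW.
Qed.

Lemma Lnorm_sum_le (p : \bar R) (I : Type) (s : seq I) (F : I -> T -> R) :
  1 <= p -> (forall i, measurable_fun setT (F i)) ->
  Lnorm mu p (EFin \o (fun x => \sum_(i <- s) F i x)%R) <=
  \sum_(i <- s) Lnorm mu p (EFin \o F i).
Proof.
move=> p1 mF; elim: s => [|i s IH].
  have -> : EFin \o (fun x => \sum_(j <- [::]) F j x)%R = cst 0.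
    by apply/funext => x; rewrite /= big_nil.
  by rewrite big_nil Lnorm0 // gt_eqF // (lt_le_trans lte01 p1).
have -> : (fun x => \sum_(j <- i :: s) F j x)%R =
          (F i \+ fun x => \sum_(j <- s) F j x)%R.
  by apply/funext => x; rewrite big_cons.
rewrite big_cons; apply: le_trans (eminkowski _ _ _ p1) _ => //.
  exact: measurable_sum.
by rewrite leeD2l.
Qed.

End Lnorm_bounds.

Section ellq.
Context {R : realType}.
Local Open Scope ereal_scope.
Implicit Types (q : \bar R) (a : nat -> \bar R).

Lemma ellq_ge0 q n a : 0 <= ellq q n a.
Proof. by case: q => [r||] /=; rewrite ?poweR_ge0 ?bigmax_ge_id. Qed.

Lemma le_ellq q n a j : 0 < q -> (forall i, 0 <= a i) -> (j < n)%N ->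
  a j <= ellq q n a.
Proof.
case: q => [r||] //= + a0 jn; last by move=> _; exact: (le_bigmax _ _ (Ordinal jn)).
rewrite lte_fin => r0.
rewrite -[a j]poweRe1 // -[1%R](mulfV (lt0r_neq0 r0)) poweRrM.
apply: gt0_ler_poweR; rewrite ?in_itv /= ?leey ?andbT ?poweR_ge0 //.
- by rewrite invr_ge0 ltW.
- by apply: sume_ge0 => i _; exact: poweR_ge0.
rewrite (bigD1 (Ordinal jn)) //=.
by apply: leeDl; apply: sume_ge0 => i _; exact: poweR_ge0.
Qed.

Lemma sum_le_ellq q n a : 0 < q -> (forall i, 0 <= a i) ->
  \sum_(i < n) a i <= n%:R%:E * ellq q n a.
Proof.
move=> q0 a0; apply: (@le_trans _ _ (\sum_(i < n) ellq q n a)).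
  by apply: lee_sum => i _; exact: le_ellq.
by rewrite sumr_const card_ord mule_natl.
Qed.

End ellq.

Section trivial_decoupling.
Context {R : realType}.

Lemma sqrt_sqrD_triangle (a b c e : R) :
  Num.sqrt ((a + b) ^+ 2 + (c + e) ^+ 2) <=
  Num.sqrt (a ^+ 2 + c ^+ 2) + Num.sqrt (b ^+ 2 + e ^+ 2).
Proof.
set A := Num.sqrt (a ^+ 2 + c ^+ 2); set B := Num.sqrt (b ^+ 2 + e ^+ 2).
have A0 : 0 <= A by exact: sqrtr_ge0.
have B0 : 0 <= B by exact: sqrtr_ge0.
have hA : A ^+ 2 = a ^+ 2 + c ^+ 2 by rewrite sqr_sqrtr // addr_ge0 // sqr_ge0.
have hB : B ^+ 2 = b ^+ 2 + e ^+ 2 by rewrite sqr_sqrtr // addr_ge0 // sqr_ge0.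
have cauchy_schwarz : a * b + c * e <= A * B.
  rewrite -sqrtrM ?addr_ge0 ?sqr_ge0 //.
  apply: (le_trans (ler_norm _)); rewrite -sqrtr_sqr ler_sqrt.
    have := sqr_ge0 (a * e - c * b); nra.
  by rewrite mulr_ge0 // addr_ge0 // sqr_ge0.
rewrite -[leRHS]ger0_norm ?addr_ge0 // -sqrtr_sqr ler_sqrt ?sqr_ge0 //.
nra.
Qed.

Lemma cmod_sum_le (I : Type) (s : seq I) (u v : I -> R -> R) x :
  cmod (fun y => \sum_(i <- s) u i y) (fun y => \sum_(i <- s) v i y) x <=
  \sum_(i <- s) cmod (u i) (v i) x.
Proof.
elim: s => [|i s IH]; first by rewrite /cmod !big_nil expr0n /= addr0 sqrtr0.
rewrite /cmod !big_cons; apply: le_trans (sqrt_sqrD_triangle _ _ _ _) _.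
by rewrite lerD2l.
Qed.

Lemma measurable_cmod (u v : R -> R) :
  measurable_fun setT u -> measurable_fun setT v -> measurable_fun setT (cmod u v).
Proof.
move=> mu mv; apply: (measurableT_comp (continuous_measurable_fun (@sqrt_continuous R))).
by apply: measurable_funD; exact: measurable_funX.
Qed.

Lemma schwartz_continuous (f : R -> R) : schwartz f -> continuous f.
Proof.
move=> sf x; have [df _] := sf 0%N.
exact/differentiable_continuous/derivable1_diffP/df.
Qed.

Lemma natr_le_mul_powR (n : nat) (K e : R) :
  0 <= e -> n%:R <= K -> n%:R <= K * n%:R `^ e.
Proof.
case: n => [|n] e0 nK; first by rewrite mulr_ge0 ?powR_ge0.
have K0 : 0 <= K by apply: le_trans nK.
apply: le_trans nK _; rewrite ler_peMr //.
by rewrite -[leLHS](powRr0 n.+1%:R); apply: ler_powR; rewrite ?ler1n.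
Qed.

Lemma einv_le_half (q : \bar R) : (2%:E <= q)%E -> einv q <= 2^-1.
Proof.
by case: q => [r||] //=; rewrite lee_fin => q2; rewrite lef_pV2 ?posrE ?(lt_le_trans _ q2).
Qed.

Lemma dec_le_size (S : set R) (fam : seq (R * R)) (p : \bar R) (K : R) :
  (2%:E <= p)%E -> (size fam)%:R <= K -> dec_le S fam p p K.
Proof.
move=> p2 NK u v hf; set N := size fam.
have p1 : (1 <= p)%E by apply: le_trans p2; rewrite lee_fin ler1n.
have p0 : (0 < p)%E by apply: lt_le_trans p1.
have meas_u (i : 'I_N) : measurable_fun setT (u i).
  have [su _] := hf i (ltn_ord i).
  apply: continuous_measurable_fun; exact: schwartz_continuous su.
have meas_v (i : 'I_N) : measurable_fun setT (v i).
  have [_ [sv _]] := hf i (ltn_ord i).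
  apply: continuous_measurable_fun; exact: schwartz_continuous sv.
have meas_cmod (i : 'I_N) : measurable_fun setT (cmod (u i) (v i)).
  exact: measurable_cmod.
have pointwise :
    (LpC p (fun x => \sum_(i < N) u i x)%R (fun x => \sum_(i < N) v i x)%R <=
     Lnorm lebesgue_measure p (EFin \o fun x => \sum_(i < N) cmod (u i) (v i) x)%R)%E.
  apply: le_Lnorm => //; first by apply: measurable_cmod; exact: measurable_sum.
    exact: measurable_sum.
  move=> x; rewrite !ger0_norm ?sumr_ge0 ?sqrtr_ge0 //; first exact: cmod_sum_le.
  by move=> i _; exact: sqrtr_ge0.
have minkowski := Lnorm_sum_le lebesgue_measure p _ (index_enum 'I_N) _ p1 meas_cmod.
have by_max := sum_le_ellq p N (fun i => LpC p (u i) (v i)) p0 (fun=> Lnorm_ge0 _ _ _).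
apply: le_trans pointwise (le_trans minkowski (le_trans by_max _)).
apply: lee_wpmul2r; first exact: ellq_ge0.
by rewrite lee_fin natr_le_mul_powR // subr_ge0 einv_le_half.
Qed.

End trivial_decoupling.

Section polynomial_lipschitz.
Context {R : realFieldType}.

Lemma dist_exprn_le (x y : R) n : `|x| <= 1 -> `|y| <= 1 ->
  `|x ^+ n - y ^+ n| <= n%:R * `|x - y|.
Proof.
move=> x1 y1; elim: n => [|n IH]; first by rewrite !expr0 subrr normr0 mul0r.
have -> : x ^+ n.+1 - y ^+ n.+1 = x * (x ^+ n - y ^+ n) + (x - y) * y ^+ n.
  by rewrite !exprS; ring.
apply: le_trans (ler_normD _ _) _; rewrite !normrM -natr1 mulrDl mul1r.
apply: lerD.
  by apply: le_trans _ IH; rewrite ler_piMl.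
by rewrite -[leRHS]mulr1 ler_wpM2l // normrX exprn_ile1.
Qed.

Definition coef_lipschitz (q : {poly R}) : R := \sum_(i < size q) `|q`_i| * i%:R.

Lemma coef_lipschitz_ge0 q : 0 <= coef_lipschitz q.
Proof. by apply: sumr_ge0 => i _; rewrite mulr_ge0. Qed.

Lemma dist_horner_le (q : {poly R}) x y : `|x| <= 1 -> `|y| <= 1 ->
  `|q.[x] - q.[y]| <= coef_lipschitz q * `|x - y|.
Proof.
move=> x1 y1; rewrite !horner_coef -sumrB mulr_suml.
apply: le_trans (ler_norm_sum _ _ _) _; apply: ler_sum => i _.
by rewrite -mulrBr normrM -mulrA ler_wpM2l // dist_exprn_le.
Qed.

Definition lagrange_node (d k : nat) : R := k%:R * (2 / d.+1%:R) - 1.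

Lemma lagrange_node_inj d : injective (lagrange_node d).
Proof.
move=> j k /eqP; rewrite /lagrange_node subr_eq subrK.
rewrite (inj_eq (mulIf _)) ?eqr_nat => [/eqP //|].
by rewrite mulf_neq0 ?invr_eq0 ?pnatr_eq0.
Qed.

Lemma lagrange_node_le1 d k : (k <= d)%N -> `|lagrange_node d k| <= 1.
Proof.
move=> kd; rewrite /lagrange_node ler_norml; set t := k%:R * _.
have t0 : 0 <= t by rewrite mulr_ge0 // divr_ge0.
have t2 : t <= 2 by rewrite /t mulrA ler_pdivrMr ?ltr0n // mulrC ler_pM2l // ler_nat ltnW.
by apply/andP; split; lra.
Qed.

End polynomial_lipschitz.

Lemma poly_class_lipschitz {R : realType} (d : nat) : exists2 L : R, 0 <= L &
  forall phi, poly_class d phi -> forall x y, `|x| <= 1 -> `|y| <= 1 ->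
    `|phi.[x] - phi.[y]| <= L * `|x - y|.
Proof.
(* Lagrange interpolation at d+1 fixed nodes writes phi as a combination of
   fixed polynomials whose coefficients phi(node) lie in [-1, 1]. *)
pose l i := tnth (d.+1.-lagrange (@lagrange_node R d)) i.
exists (\sum_(i < d.+1) coef_lipschitz (l i)).
  by apply: sumr_ge0 => i _; exact: coef_lipschitz_ge0.
move=> phi [sphi phi1] x y x1 y1.
rewrite (lagrange_gen (ltn0Sn d) (@lagrange_node_inj R d) sphi).
rewrite !horner_sum -sumrB mulr_suml; apply: le_trans (ler_norm_sum _ _ _) _.
apply: ler_sum => i _; rewrite !hornerM !hornerC -mulrBr normrM.
apply: le_trans _ (dist_horner_le _ _ _ x1 y1).
by rewrite ler_piMl // phi1 // -ler_norml lagrange_node_le1 // -ltnS.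
Qed.

Section sublevel_components.
Context {R : realType}.

Lemma IVT_minmax (f : R -> R) (x y v : R) : continuous f ->
  Num.min (f x) (f y) <= v <= Num.max (f x) (f y) ->
  exists2 z, Num.min x y <= z <= Num.max x y & f z = v.
Proof.
move=> cf.
suff ivt a b : a <= b -> Num.min (f a) (f b) <= v <= Num.max (f a) (f b) ->
    exists2 z, a <= z <= b & f z = v.
  by have [xy|/ltW yx] := leP x y; [exact: ivt | rewrite minC maxC; exact: ivt].
move=> ab fv; have [|z] := IVT ab _ fv; first by move=> z; exact: continuous_subspaceT.
by rewrite in_itv /=; exists z.
Qed.

Lemma sublevel_crossing (f : R -> R) (delta x y : R) : continuous f ->
  `|f x| <= delta -> delta < `|f y| ->
  exists2 z, Num.min x y <= z <= Num.max x y & `|f z| = delta.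
Proof.
move=> cf fx fy; have d0 : 0 <= delta by apply: le_trans fx.
have [v fxy vd] : exists2 v,
    Num.min (f x) (f y) <= v <= Num.max (f x) (f y) & `|v| = delta.
  move: fx fy; rewrite ler_norml ltr_normr => /andP[fx1 fx2] /orP[fy|fy].
    exists delta; last exact: ger0_norm.
    by rewrite ge_min le_max fx2 (ltW fy) orbT.
  exists (- delta); last by rewrite normrN ger0_norm.
  by rewrite ge_min le_max fx1 [f y <= _]lerNr (ltW fy) orbT.
by have [z zxy fz] := IVT_minmax _ _ _ _ cf fxy; exists z; rewrite // fz.
Qed.

Lemma sublevel_component (f : R -> R) (delta lo hi x : R) (E : seq R) :
  continuous f -> lo \in E -> hi \in E ->
  (forall z, `|f z| = delta -> z \in E) ->
  lo <= x <= hi -> `|f x| <= delta ->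
  exists e e', [/\ e \in E, e' \in E, e <= x <= e' &
    forall y, e <= y <= e' -> lo <= y <= hi /\ `|f y| <= delta].
Proof.
move=> cf loE hiE levelE /andP[lox xhi] fx.
(* e and e' are the points of E nearest to x; a point of [e, e'] outside the
   sublevel set would yield, by the IVT, a point of E strictly nearer to x. *)
pose e := \big[Num.max/lo]_(z <- E | z <= x) z.
pose e' := \big[Num.min/hi]_(z <- E | x <= z) z.
have below z : z \in E -> z <= x -> z <= e by move=> zE zx; exact: le_bigmax_seq.
have above z : z \in E -> x <= z -> e' <= z by move=> zE xz; exact: ge_bigmin_seq.
have loe : lo <= e := below lo loE lox.
have e'hi : e' <= hi := above hi hiE xhi.
have ex : e <= x by exact: bigmax_le.
have xe' : x <= e' by exact: le_bigmin.
exists e, e'; split; rewrite ?ex ?xe' //.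
- rewrite /e big_seq_cond; apply: (big_ind (fun t => t \in E)) => //.
    by move=> a b; case: (leP a b).
  by move=> z /andP[].
- rewrite /e' big_seq_cond; apply: (big_ind (fun t => t \in E)) => //.
    by move=> a b; case: (leP a b).
  by move=> z /andP[].
move=> y /andP[ey ye']; split; first by apply/andP; split; lra.
rewrite leNgt; apply/negP => fy.
have [z /andP[z1 z2] fz] := sublevel_crossing _ _ _ _ cf fx fy.
have zy : z != y by apply: contra_eq_neq fz => ->; rewrite gt_eqF.
have := levelE z fz; have [xy|/ltW yx] := leP x y.
  move: z1 z2; rewrite min_l // max_r // => z1 z2 /above /(_ z1).
  by move: zy; rewrite neq_lt => /orP[]; lra.
move: z1 z2; rewrite min_r // max_l // => z1 z2 /below /(_ z2).
by move: zy; rewrite neq_lt => /orP[]; lra.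
Qed.

End sublevel_components.

Section level_points.
Context {R : rcfType}.
Implicit Types (phi : {poly R}) (delta lo hi : R).

(* phi^2 - delta^2 vanishes exactly where |phi| = delta, i.e. at both levels
   +delta and -delta at once. *)
Definition level_points phi delta lo hi : seq R :=
  lo :: hi :: rootsR (phi ^+ 2 - (delta ^+ 2)%:P).

Lemma size_level_points d phi delta lo hi : (size phi <= d.+1)%N ->
  (size (level_points phi delta lo hi) <= 2 * d + 2)%N.
Proof.
move=> sphi; rewrite /= !addn2 !ltnS.
set q := phi ^+ 2 - _; have [->|q0] := eqVneq q 0; first by rewrite rootsR0.
have sq : (size q <= (2 * d).+1)%N.
  apply: leq_trans (size_add _ _) _; rewrite geq_max size_opp.
  rewrite (leq_trans (size_polyC_leq1 _)) // andbT.
  apply: leq_trans (size_exp_leq _ _) _; rewrite ltnS mulnC leq_mul2l.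
  by rewrite -subn1 leq_subLR add1n.
rewrite -ltnS (leq_trans _ sq) // max_poly_roots ?uniq_roots //.
by apply/allP => z; exact: root_roots.
Qed.

Lemma mem_level_points phi delta lo hi z : phi ^+ 2 != (delta ^+ 2)%:P ->
  `|phi.[z]| = delta -> z \in level_points phi delta lo hi.
Proof.
rewrite -subr_eq0 => q0 pz; rewrite !inE -roots_on_rootsR //=.
suff -> : root (phi ^+ 2 - (delta ^+ 2)%:P) z by rewrite !orbT.
by rewrite /root !hornerE -pz real_normK ?subrr ?num_real.
Qed.

End level_points.

Lemma poly_sublevel_component {R : realType} (phi : {poly R}) (delta lo hi x : R) :
  0 <= delta -> lo <= x <= hi -> `|phi.[x]| <= delta ->
  exists e e', [/\ e \in level_points phi delta lo hi,
    e' \in level_points phi delta lo hi, e <= x <= e' &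
    forall y, e <= y <= e' -> lo <= y <= hi /\ `|phi.[y]| <= delta].
Proof.
move=> d0 xlh px; have [q0|q0] := eqVneq (phi ^+ 2) (delta ^+ 2)%:P; last first.
  apply: sublevel_component px => //; first exact: continuous_horner.
  - by rewrite inE eqxx.
  - by rewrite !inE eqxx orbT.
  by move=> z; exact: mem_level_points.
exists lo, hi; rewrite !inE !eqxx orbT; split => // y ylh; split => //.
have /eqP : `|phi.[y]| ^+ 2 = delta ^+ 2.
  by rewrite real_normK ?num_real // -horner_exp q0 hornerC.
by rewrite eqrXn2 // => /eqP ->.
Qed.

Section sublevel_family.
Context {R : realType}.
Implicit Types (phi : {poly R}) (Rr P ab : R * R) (delta : R).

Definition par_of ab : R * R := ((ab.1 + ab.2) / 2, (ab.2 - ab.1) / 2).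

Lemma par_set1P P y : par_set P 1 y <-> P.1 - P.2 <= y <= P.1 + P.2.
Proof.
rewrite /par_set /= mul1r ler_norml.
by split => /andP[? ?]; apply/andP; split; lra.
Qed.

Lemma par_set_of ab y : par_set (par_of ab) 1 y <-> ab.1 <= y <= ab.2.
Proof.
rewrite par_set1P /=.
by split => /andP[? ?]; apply/andP; split; lra.
Qed.

Lemma le_par_set P (mu nu : R) : 0 <= P.2 -> mu <= nu ->
  par_set P mu `<=` par_set P nu.
Proof. by move=> P0 munu y /= /le_trans; apply; rewrite ler_wpM2r. Qed.

Definition stretch delta (hi : R) ab : R * R :=
  let a := Num.min ab.1 (hi - 2 * delta) in (a, Num.max ab.2 (a + 2 * delta)).

Lemma stretchP delta (lo hi : R) ab :
  2 * delta <= hi - lo -> lo <= ab.1 -> ab.1 <= ab.2 -> ab.2 <= hi ->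
  let st := stretch delta hi ab in
  [/\ lo <= st.1 <= ab.1, ab.2 <= st.2 <= hi, 2 * delta <= st.2 - st.1 &
      forall y, st.1 <= y <= st.2 -> ab.1 <= y <= ab.2 \/ `|y - ab.1| <= 2 * delta].
Proof.
move=> dlh loa aa a'hi /=; set a := Num.min _ _; set a' := Num.max _ _.
have [a1 a2 aE] : [/\ a <= ab.1, a <= hi - 2 * delta & a = ab.1 \/ a = hi - 2 * delta].
  by rewrite /a; case: (leP ab.1 (hi - 2 * delta)) => h; split; lra.
have [a'1 a'2 a'E] : [/\ ab.2 <= a', a + 2 * delta <= a' & a' = ab.2 \/ a' = a + 2 * delta].
  by rewrite /a'; case: (leP ab.2 (a + 2 * delta)) => h; split; lra.
split; try (apply/andP; split); try lra.
move=> y /andP[y1 y2]; case: (leP ab.1 y) => ?; case: (leP y ab.2) => ?;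
  first [by left; apply/andP | by right; rewrite ler_norml; apply/andP; split; lra].
Qed.

Definition sublevel_interval phi Rr delta ab : Prop :=
  ab.1 <= ab.2 /\ [set y | ab.1 <= y <= ab.2] `<=` sublevel phi Rr delta.

Lemma sublevel_interval_in phi Rr delta ab : sublevel_interval phi Rr delta ab ->
  Rr.1 - Rr.2 <= ab.1 /\ ab.2 <= Rr.1 + Rr.2.
Proof.
move=> [ab12 sub].
have /sub[/par_set1P/andP[lo1 _] _] : ab.1 <= ab.1 <= ab.2 by rewrite lexx.
have /sub[/par_set1P/andP[_ hi2] _] : ab.1 <= ab.2 <= ab.2 by rewrite lexx andbT.
by split.
Qed.

Definition sublevel_family phi Rr delta : seq (R * R) :=
  let E := level_points phi delta (Rr.1 - Rr.2) (Rr.1 + Rr.2) in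
  undup [seq par_of (stretch delta (Rr.1 + Rr.2) ab) |
         ab <- allpairs pair E E & `[< sublevel_interval phi Rr delta ab >]].

Lemma sublevel_familyP phi Rr delta P : P \in sublevel_family phi Rr delta ->
  exists2 ab, sublevel_interval phi Rr delta ab &
    P = par_of (stretch delta (Rr.1 + Rr.2) ab).
Proof.
by rewrite mem_undup => /mapP[ab]; rewrite mem_filter => /andP[/asboolP ? _ ->]; exists ab.
Qed.

Lemma size_sublevel_family d phi Rr delta : (size phi <= d.+1)%N ->
  (size (sublevel_family phi Rr delta) <= (2 * d + 2) ^ 2)%N.
Proof.
move=> sphi; apply: leq_trans (size_undup _) _.
rewrite size_map size_filter (leq_trans (count_size _ _)) // size_allpairs.
by rewrite expnS expn1 leq_mul // size_level_points.
Qed.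

End sublevel_family.

Section sublevel_family_properties.
Context {R : realType}.
Variables (phi : {poly R}) (Rr : R * R) (delta : R).

Let stretchP_in ab : delta <= Rr.2 -> sublevel_interval phi Rr delta ab ->
  let st := stretch delta (Rr.1 + Rr.2) ab in
  [/\ Rr.1 - Rr.2 <= st.1 <= ab.1, ab.2 <= st.2 <= Rr.1 + Rr.2,
      2 * delta <= st.2 - st.1 &
      forall y, st.1 <= y <= st.2 -> ab.1 <= y <= ab.2 \/ `|y - ab.1| <= 2 * delta].
Proof.
move=> dRr abI; case/sublevel_interval_in: (abI) => lo1 hi2; case: abI => ab12 _.
by apply: stretchP => //; lra.
Qed.

Lemma sublevel_family_member P : delta <= Rr.2 ->
  P \in sublevel_family phi Rr delta ->
  exists2 ab, sublevel_interval phi Rr delta ab &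
    [/\ delta <= P.2, par_set P 1 `<=` par_set Rr 1 &
        forall y, par_set P 1 y -> ab.1 <= y <= ab.2 \/ `|y - ab.1| <= 2 * delta].
Proof.
move=> dRr /sublevel_familyP[ab abI ->]; exists ab => //.
have [/andP[st1 _] /andP[_ st2] width near] := stretchP_in _ dRr abI.
split=> [|y|y]; rewrite ?par_set_of; first by move: width => /=; lra.
  by move=> /andP[? ?]; apply/par_set1P/andP; split; lra.
exact: near.
Qed.

Lemma sublevel_family_cover : 0 <= delta -> delta <= Rr.2 ->
  par_cover (sublevel phi Rr delta) (sublevel_family phi Rr delta).
Proof.
move=> d0 dRr x [/par_set1P xR px].
have [e [e' [eE e'E /andP[ex xe'] sub]]] :=
  poly_sublevel_component _ _ _ _ _ d0 xR px.
have abI : sublevel_interval phi Rr delta (e, e').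
  split=> [|y /= /sub[/par_set1P yR py]]; [exact: le_trans xe' | by split].
exists (par_of (stretch delta (Rr.1 + Rr.2) (e, e'))).
  rewrite mem_undup; apply: map_f.
  by rewrite mem_filter allpairs_f // andbT; exact/asboolP.
have [/andP[_ st1] /andP[st2 _] _ _] := stretchP_in _ dRr abI.
by apply/par_set_of; move: st1 st2 => /= st1 st2; apply/andP; split; lra.
Qed.

Lemma sublevel_family_bound (L : R) : 0 <= delta -> delta <= Rr.2 -> 0 <= L ->
  (forall x y, `|x| <= 1 -> `|y| <= 1 -> `|phi.[x] - phi.[y]| <= L * `|x - y|) ->
  par_set Rr 1 `<=` [set x | -1 <= x <= 1] ->
  forall P, P \in sublevel_family phi Rr delta ->
  forall y, par_set P 1 y -> `|phi.[y]| <= (1 + 2 * L) * delta.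
Proof.
move=> d0 dRr L0 lip Rsub P /(sublevel_family_member _ dRr).
move=> [ab [ab12 sub] [_ PR near]] y Py.
have in_unit z : par_set Rr 1 z -> `|z| <= 1 by move=> /Rsub; rewrite ler_norml.
have [/sub[_ py]|ye] := near y Py; first by nra.
have [eR pe] : sublevel phi Rr delta ab.1 by apply: sub; rewrite /= lexx.
have := lip y ab.1 (in_unit y (PR y Py)) (in_unit _ eR).
have := lerB_dist phi.[y] phi.[ab.1]; have := ler_wpM2l L0 ye.
nra.
Qed.

End sublevel_family_properties.

Lemma overlap_le_size {R : realType} (fam : seq (R * R)) (K : R) :
  (size fam)%:R <= K -> overlap_le fam (fun=> K).
Proof.
move=> NK mu _ x; apply: le_trans NK; rewrite -sum1_size natr_sum ler_sum // => P _.
by rewrite indicE lern1 leq_b1.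
Qed.

Lemma powRN_ge1 {R : realType} (x e : R) : 0 < x <= 1 -> 0 <= e -> 1 <= x `^ (- e).
Proof.
move=> /andP[x0 x1] e0; rewrite powRN invf_ge1 ?powR_gt0 //.
by rewrite -[leRHS](powRr0 x); apply: ger_powR; rewrite ?x0.
Qed.

Theorem proposition2p5 (R : realType) :
  forall d : nat, (1 <= d)%N ->
  exists c : R, 0 < c /\
  exists (B : R -> R -> R) (C : R -> R) (Cd : R -> \bar R -> R),
    (forall eps : R, 0 < eps <= 1 -> overlap_fun (B eps)) /\
    forall phi : {poly R}, poly_class d phi ->
    forall delta : R, 0 < delta < c ->
    forall eps : R, 0 < eps <= 1 ->
    forall Rr : R * R, is_par Rr ->
      par_set Rr 1 `<=` [set x | -1 <= x <= 1] -> delta <= Rr.2 ->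
    exists fam : seq (R * R),
      uniq fam /\ (forall P, P \in fam -> is_par P) /\
      par_cover (sublevel phi Rr delta) fam /\
      (forall P, P \in fam -> par_set P 1 `<=` par_set Rr 2) /\
      (forall P, P \in fam -> delta <= P.2) /\
      overlap_le fam (B eps) /\
      (forall P, P \in fam -> forall x, par_set P 1 x ->
          `|phi.[x]| <= C eps * delta) /\
      (forall p : \bar R, (2%:E <= p)%E ->
          dec_le (sublevel phi Rr delta) fam p p
                 (Cd eps p * delta `^ (- eps))).
Proof.
move=> d _; have [L L0 lip] := @poly_class_lipschitz R d.
pose K : R := ((2 * d + 2) ^ 2)%N%:R.
have K1 : 1 <= K by rewrite ler1n expn_gt0 addn2.
exists 1; split => //; exists (fun _ _ => K), (fun _ => 1 + 2 * L), (fun _ _ => K).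
split=> [eps _|phi phid delta /andP[d0 d1] eps /andP[e0 _] Rr _ Rsub dRr].
  by split=> // mu1 mu2.
set fam := sublevel_family phi Rr delta.
have famK : (size fam)%:R <= K by rewrite ler_nat size_sublevel_family //; case: phid.
have member P (Pfam : P \in fam) := sublevel_family_member _ _ _ _ dRr Pfam.
exists fam; split; first exact: undup_uniq.
split; first by move=> P /member[ab _ [Pd _ _]]; exact: lt_le_trans Pd.
split; first exact: sublevel_family_cover _ _ _ (ltW d0) dRr.
split.
  move=> P /member[ab _ [_ PR _]]; apply: subset_trans PR _.
  by apply: le_par_set; [exact: le_trans (ltW d0) dRr | rewrite ler1n].
split; first by move=> P /member[ab _ []].
split; first exact: overlap_le_size.
split; first exact: sublevel_family_bound _ _ _ _ (ltW d0) dRr L0 (lip phi phid) Rsub.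
move=> p p2; apply: dec_le_size p2 (le_trans famK _).
by rewrite ler_peMr ?(le_trans ler01 K1) // powRN_ge1 ?d0 ?ltW.
Qed.
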